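(* Fix a nonnegative integer $n$ and define \[ \widetilde{T}_n(a,c)=(1+a-c)_n(c)_n\,{}_3F_2\!\left(\left.{-n,\frac{a}{2},\frac{a+1}{2} \atop 1+a-c,c}\right| 4\right). \] Then, whenever both sides are defined, \[ {}_3F_2\!\left(\left.{-n,\frac{a}{2},\frac{a+1}{2} \atop 1+a-c,c}\right| 4\right) =\frac{(-1)^n(a)_n}{(1+a-c)_n}\,{}_3F_2\!\left(\left.{-n,\frac{c-a-n}{2},\frac{c-a-n+1}{2} \atop 1-a-n,c}\right| 4\right), \] so $\widetilde{T}_n(a,c)=\widetilde{T}_n(c-a-n,c)$. The group of transformations of $(a,c)$ generated by $(a,c)\mapsto(a,1+a-c)$ and $(a,c)\mapsto(c-a-n,c)$ is isomorphic to $S_3$ and yields the six invariances $\widetilde{T}_n(a,c)=\widetilde{T}_n(a,c)=\widetilde{T}_n(a,1+a-c)=\widetilde{T}_n(c-a-n,c)=\widetilde{T}_n(c-a-n,1-a-n)=\widetilde{T}_n(1-c-n,1+a-c)=\widetilde{T}_n(1-c-n,1-a-n)$. Moreover, the function \[ \widetilde{U}_n(x,y,z)=\widetilde{T}_n\!\left(\frac{1+2x-y-z-2n}{3},\frac{2+x+y-2z-n}{3}\right) \] is invariant under all six permutations of $x,y,z$.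
   Context: For $a\in\mathbb{C}$, $(a)_0=1$ and $(a)_k=a(a+1)\cdots(a+k-1)$ for $k\ge1$. The hypergeometric series is ${}_rF_s\!\left(\left.{\alpha_1,\ldots,\alpha_r\atop \beta_1,\ldots,\beta_s}\right|z\right)=\sum_{k\ge0}\frac{(\alpha_1)_k\cdots(\alpha_r)_k}{k!(\beta_1)_k\cdots(\beta_s)_k}z^k$, with no lower parameter zero or a negative integer; when an upper parameter is $-n$ it is a finite sum over $0\le k\le n$. *)

From mathcomp Require Import all_boot all_algebra.
From mathcomp Require Import reals complex.
Set Implicit Arguments. Unset Strict Implicit. Unset Printing Implicit Defensive.
Import GRing.Theory Num.Theory.
Local Open Scope ring_scope.

Definition poch {F : fieldType} (x : F) (k : nat) : F :=
  \prod_(i < k) (x + i%:R).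

Definition F32 {F : fieldType} (n : nat) (a1 a2 b1 b2 z : F) : F :=
  \sum_(k < n.+1)
    (poch (- n%:R) k * poch a1 k * poch a2 k)
    / (k`!%:R * poch b1 k * poch b2 k) * z ^+ k.

Definition admissible {F : fieldType} (b : F) : Prop :=
  forall m : nat, b <> - m%:R.

Definition Tt {F : fieldType} (n : nat) (a c : F) : F :=
  poch (1 + a - c) n * poch c n *
  F32 n (a / 2%:R) ((a + 1) / 2%:R) (1 + a - c) c 4%:R.

Definition Tt_defined {F : fieldType} (a c : F) : Prop :=
  admissible (1 + a - c) /\ admissible c.

Definition Ut {F : fieldType} (n : nat) (x y z : F) : F :=
  Tt n ((1 + 2%:R * x - y - z - 2%:R * n%:R) / 3%:R)
       ((2%:R + x + y - 2%:R * z - n%:R) / 3%:R).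

Definition Ut_defined {F : fieldType} (n : nat) (x y z : F) : Prop :=
  Tt_defined ((1 + 2%:R * x - y - z - 2%:R * n%:R) / 3%:R)
             ((2%:R + x + y - 2%:R * z - n%:R) / 3%:R).

Definition g1 {F : fieldType} (n : nat) (p : F * F) : F * F :=
  (p.1, 1 + p.1 - p.2).
Definition g2 {F : fieldType} (n : nat) (p : F * F) : F * F :=
  (p.2 - p.1 - n%:R, p.2).

From mathcomp Require Import all_boot all_algebra.
From mathcomp Require Import reals complex.
From mathcomp Require Import ring.
Set Implicit Arguments. Unset Strict Implicit. Unset Printing Implicit Defensive.
Import GRing.Theory Num.Theory.
Local Open Scope ring_scope.

(* Put u = 1 + a - c, v = c and w = 1 - a - n, so that u + v + w = 2 - n.  Using
   4^k (a/2)_k ((a+1)/2)_k = (a)_2k and (b)_n = (b)_k (b+k)_(n-k), T~_n(a,c) becomes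
     T_n(u,v) = sum_k (-1)^k C(n,k) (u+v-1)_2k (u+k)_(n-k) (v+k)_(n-k),
   which is visibly symmetric in u and v.  It satisfies the recurrence
     T_(n+1)(u,v) = (v+n)(w+n) T_n(u+1,v) + (u+n)(w+n) T_n(u,v+1) + (u+n)(v+n) T_n(u,v),
   and by induction on n the right-hand side is unchanged when u and w are exchanged,
   so T_n is a symmetric function of (u,v,w).  The maps g1 and g2 act on (u,v,w) as
   the transpositions of u,v and of u,w, and U~_n(x,y,z) is T_n at (d-y, d-z, d-x)
   with d = (2 - n + x + y + z)/3, which gives all the stated invariances. *)

Lemma sumr_binomialS (V : nmodType) n (f : nat -> V) :
  \sum_(k < n.+2) f k *+ 'C(n.+1, k) = \sum_(k < n.+1) (f k + f k.+1) *+ 'C(n, k).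
Proof.
have shift_bin : \sum_(k < n.+1) f k *+ 'C(n, k) = f 0%N + \sum_(k < n.+1) f k.+1 *+ 'C(n, k.+1).
  by rewrite big_ord_recl [in RHS]big_ord_recr /= (bin_small (ltnSn n)) mulr0n addr0 bin0 mulr1n.
rewrite big_ord_recl bin0 mulr1n.
under eq_bigr do rewrite lift0 binS mulrnDr.
by rewrite big_split /= addrA -shift_bin -big_split; under [RHS]eq_bigr do rewrite mulrnDl.
Qed.

Lemma eq_by_scaled_difference (R : pzRingType) (s a b x y : R) :
  a = b -> x - y = s * (a - b) -> x = y.
Proof. by move=> ->; rewrite subrr mulr0 => /eqP; rewrite subr_eq0 => /eqP. Qed.

Section Pochhammer.
Variable F : fieldType.
Implicit Types (x a : F) (k m n : nat).

Lemma poch0 x : poch x 0 = 1.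
Proof. by rewrite /poch big_ord0. Qed.

Lemma pochSr x k : poch x k.+1 = poch x k * (x + k%:R).
Proof. by rewrite /poch big_ord_recr. Qed.

Lemma pochSl x k : poch x k.+1 = x * poch (x + 1) k.
Proof.
rewrite /poch big_ord_recl addr0; congr (_ * _).
by apply: eq_bigr => i _; rewrite lift0 -addrA nat1r.
Qed.

Lemma poch_shift x k : (x + k%:R) * poch x k = x * poch (x + 1) k.
Proof. by rewrite -pochSl pochSr mulrC. Qed.

Lemma pochD x k m : poch x (k + m) = poch x k * poch (x + k%:R) m.
Proof.
elim: m => [|m IHm]; first by rewrite addn0 poch0 mulr1.
by rewrite addnS !pochSr IHm natrD addrA mulrA.
Qed.

Lemma poch_reflect a n : poch (1 - a - n%:R) n = (-1) ^+ n * poch a n.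
Proof.
elim: n => [|n IHn]; first by rewrite !poch0 mulr1.
rewrite pochSl (_ : 1 - a - n.+1%:R + 1 = 1 - a - n%:R); last by rewrite -natr1; ring.
by rewrite IHn pochSr exprS -natr1; ring.
Qed.

Lemma poch_oppn n k : (k <= n)%N -> poch (- n%:R : F) k = (-1) ^+ k * (n ^_ k)%:R.
Proof.
elim: k => [|k IHk] lt_kn; first by rewrite poch0 ffactn0 mulr1.
rewrite pochSr IHk ?(ltnW lt_kn) // exprS ffactnSr natrM natrB ?(ltnW lt_kn) //; ring.
Qed.

Lemma poch_neq0 a k : admissible a -> poch a k != 0.
Proof.
move=> adm_a; apply/prodf_neq0 => i _; apply/eqP => /eqP.
by rewrite addr_eq0 => /eqP /adm_a.
Qed.

Lemma poch_half a k : 2%:R != 0 :> F ->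
  poch (a / 2%:R) k * poch ((a + 1) / 2%:R) k * 4%:R ^+ k = poch a (2 * k).
Proof.
move=> two_neq0; elim: k => [|k IHk]; first by rewrite !poch0 !mulr1.
rewrite mulnS !pochSr -IHk exprS -natr1 mul2n -addnn natrD.
by field.
Qed.

End Pochhammer.

Lemma three_term_relation (R : comPzRingType) (u v k n E E' P P' Q Q' : R) :
  (u + n) * P = (u + k) * P' -> (v + n) * Q = (v + k) * Q' ->
  (u + v - 1 + 2%:R * k) * E = (u + v - 1) * E' ->
  (v + n) * (1 - u - v) * (E' * P' * Q) + (u + n) * (1 - u - v) * (E' * P * Q')
    + (u + n) * (v + n) * (E * P * Q)
  = E * ((u + k) * P') * ((v + k) * Q')
    - E * (u + v - 1 + 2%:R * k) * (u + v + 2%:R * k) * P' * Q'.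
Proof.
move=> hP hQ hE.
(* Each of (v+n) Q, (u+n) P and (u+v-1) E' occurs exactly once on the left. *)
have -> : (v + n) * (1 - u - v) * (E' * P' * Q) = - ((u + v - 1) * E') * P' * ((v + n) * Q)
  by ring.
have -> : (u + n) * (1 - u - v) * (E' * P * Q') = - ((u + v - 1) * E') * ((u + n) * P) * Q'
  by ring.
have -> : (u + n) * (v + n) * (E * P * Q) = E * ((u + n) * P) * ((v + n) * Q) by ring.
by rewrite hP hQ -hE; ring.
Qed.

Section SymmetricForm.
Variable F : fieldType.
Implicit Types (u v w : F) (k m n : nat).

Definition Tuv_weight m u v k : F :=
  (-1) ^+ k * poch (u + v - 1) (2 * k) * poch (u + k%:R) (m - k) * poch (v + k%:R) (m - k).

Definition Tuv n u v : F := \sum_(k < n.+1) Tuv_weight n u v k *+ 'C(n, k).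

Lemma Tuv_weightS n u v k : (k <= n)%N ->
  (v + n%:R) * (1 - u - v) * Tuv_weight n (u + 1) v k
    + (u + n%:R) * (1 - u - v) * Tuv_weight n u (v + 1) k
    + (u + n%:R) * (v + n%:R) * Tuv_weight n u v k
  = Tuv_weight n.+1 u v k + Tuv_weight n.+1 u v k.+1.
Proof.
move=> le_kn; rewrite /Tuv_weight.
have succ_shift (x : F) : x + k%:R + 1 = x + k.+1%:R by rewrite -addrA natr1.
have poch_tail (x : F) :
    (x + n%:R) * poch (x + k%:R) (n - k) = (x + k%:R) * poch (x + k.+1%:R) (n - k).
  by rewrite -succ_shift -poch_shift -addrA -natrD subnKC.
have poch_head := poch_shift (u + v - 1) (2 * k).
rewrite natrM (_ : u + v - 1 + 1 = u + v) in poch_head; last by ring.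
rewrite (_ : u + 1 + v - 1 = u + v); last by ring.
rewrite (_ : u + (v + 1) - 1 = u + v); last by ring.
rewrite (_ : u + 1 + k%:R = u + k.+1%:R); last by rewrite addrAC succ_shift.
rewrite (_ : v + 1 + k%:R = v + k.+1%:R); last by rewrite addrAC succ_shift.
rewrite subSS (subSn le_kn) !(pochSl _ (n - k)) !succ_shift.
rewrite (_ : (2 * k.+1 = (2 * k).+2)%N) ?mulnS // (pochSr _ (2 * k).+1) pochSr exprS.
apply: (eq_by_scaled_difference (s := (-1) ^+ k)
  (three_term_relation (poch_tail u) (poch_tail v) poch_head)).
by ring.
Qed.

Lemma TuvS n u v :
  Tuv n.+1 u v = (v + n%:R) * (1 - u - v) * Tuv n (u + 1) v
    + (u + n%:R) * (1 - u - v) * Tuv n u (v + 1) + (u + n%:R) * (v + n%:R) * Tuv n u v.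
Proof.
rewrite /Tuv sumr_binomialS !mulr_sumr -!big_split; apply: eq_bigr => k _.
by rewrite -(@Tuv_weightS n u v k (ltn_ord k)) 2!mulrnDl !mulrnAr.
Qed.

Lemma TuvC n u v : Tuv n u v = Tuv n v u.
Proof.
apply: eq_bigr => k _; congr (_ *+ _).
by rewrite /Tuv_weight [RHS]mulrAC (addrC v u).
Qed.

Lemma Tuv_exchange n u v w : u + v + w = 2%:R - n%:R -> Tuv n u v = Tuv n w v.
Proof.
elim: n u v w => [|n IHn] u v w sum_uvw.
  by rewrite /Tuv !big_ord1 /Tuv_weight !poch0.
have def_w : w = 1 - n%:R - u - v by rewrite -[w](addKr (u + v)) sum_uvw; ring.
have IHu : Tuv n (u + 1) v = Tuv n w v by apply: IHn; rewrite def_w; ring.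
have IHv : Tuv n u (v + 1) = Tuv n w (v + 1) by apply: IHn; rewrite def_w; ring.
have IHw : Tuv n u v = Tuv n (w + 1) v by apply: IHn; rewrite def_w; ring.
by rewrite !TuvS IHu IHv IHw def_w; ring.
Qed.

Lemma Tuv_perm n u v w : u + v + w = 2%:R - n%:R ->
  Tuv n u v = Tuv n v u /\ Tuv n u v = Tuv n w v /\ Tuv n u v = Tuv n v w
  /\ Tuv n u v = Tuv n w u /\ Tuv n u v = Tuv n u w.
Proof.
move=> sum_uvw; have Euw := Tuv_exchange sum_uvw.
have Evw : Tuv n v u = Tuv n w u by apply: Tuv_exchange; rewrite -sum_uvw; ring.
split; first exact: TuvC.
split; first exact: Euw.
split; first by rewrite Euw TuvC.
split; first by rewrite TuvC Evw.
by rewrite TuvC Evw TuvC.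
Qed.

End SymmetricForm.

Lemma g1K (F : fieldType) n : involutive (@g1 F n).
Proof. by move=> [a c]; rewrite /g1 /=; congr pair; ring. Qed.

Lemma g2K (F : fieldType) n : involutive (@g2 F n).
Proof. by move=> [a c]; rewrite /g2 /=; congr pair; ring. Qed.

Lemma g1g2_order3 (F : fieldType) n (p : F * F) :
  g1 n (g2 n (g1 n (g2 n (g1 n (g2 n p))))) = p.
Proof. by case: p => a c; rewrite /g1 /g2 /=; congr pair; ring. Qed.

Lemma g1g2_noncommuting (F : fieldType) n :
  ~ (forall p : F * F, g1 n (g2 n p) = g2 n (g1 n p)).
Proof.
move=> /(_ (0, 0)) /(congr1 fst) /=.
by rewrite !subr0 addr0 => /addIr /esym /eqP; rewrite oner_eq0.
Qed.

Section Transformations.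
Variables (F : numFieldType) (n : nat).

Lemma Tt_Tuv (a c u : F) : Tt_defined a c -> u = 1 + a - c -> Tt n a c = Tuv n u c.
Proof.
move=> [adm_b adm_c] ->; rewrite /Tt /F32 /Tuv /Tuv_weight mulr_sumr.
apply: eq_bigr => -[k /= le_kn] _.
have split_poch (x : F) : poch x n = poch x k * poch (x + k%:R) (n - k).
  by rewrite -pochD subnKC.
have fact_neq0 : k`!%:R != 0 :> F by rewrite pnatr_eq0 -lt0n fact_gt0.
have poch_b_neq0 := poch_neq0 k adm_b; have poch_c_neq0 := poch_neq0 k adm_c.
rewrite (_ : 1 + a - c + c - 1 = a); last by ring.
rewrite -(poch_half a k) ?pnatr_eq0 // poch_oppn // !split_poch -bin_ffact natrM -mulr_natr.
by field; rewrite fact_neq0 poch_b_neq0 poch_c_neq0.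
Qed.

Lemma Ut_Tuv (x y z s : F) : s = x + y + z -> Ut_defined n x y z ->
  Ut n x y z = Tuv n ((2%:R - n%:R + s) / 3%:R - y) ((2%:R - n%:R + s) / 3%:R - z).
Proof.
move=> -> Ut_def; rewrite /Ut (Tt_Tuv Ut_def erefl).
have three_neq0 : 3%:R != 0 :> F by rewrite pnatr_eq0.
by congr Tuv; field.
Qed.

Lemma Tt_reflection (a c : F) :
  Tt_defined a c -> Tt_defined (c - a - n%:R) c -> Tt n a c = Tt n (c - a - n%:R) c.
Proof.
move=> def1 def2; rewrite (Tt_Tuv def1 erefl) (Tt_Tuv def2 erefl).
by apply: Tuv_exchange; ring.
Qed.

Lemma F32_reflection (a c : F) :
  admissible (1 + a - c) -> admissible c -> admissible (1 - a - n%:R) ->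
  F32 n (a / 2%:R) ((a + 1) / 2%:R) (1 + a - c) c 4%:R
  = (-1) ^+ n * poch a n / poch (1 + a - c) n *
    F32 n ((c - a - n%:R) / 2%:R) ((c - a - n%:R + 1) / 2%:R) (1 - a - n%:R) c 4%:R.
Proof.
move=> adm_b adm_c adm_w.
have b'E : 1 + (c - a - n%:R) - c = 1 - a - n%:R by ring.
have def2 : Tt_defined (c - a - n%:R) c by split; rewrite ?b'E.
have := Tt_reflection (conj adm_b adm_c) def2; rewrite /Tt b'E poch_reflect => Tt_eq.
have poch_b_neq0 := poch_neq0 n adm_b; have poch_c_neq0 := poch_neq0 n adm_c.
apply: (mulfI (mulf_neq0 poch_b_neq0 poch_c_neq0)).
by rewrite Tt_eq; field.
Qed.

Lemma Tt_invariances (a c : F) :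
  Tt_defined a c -> Tt_defined a (1 + a - c) ->
  Tt_defined (c - a - n%:R) c -> Tt_defined (c - a - n%:R) (1 - a - n%:R) ->
  Tt_defined (1 - c - n%:R) (1 + a - c) -> Tt_defined (1 - c - n%:R) (1 - a - n%:R) ->
  Tt n a c = Tt n a (1 + a - c)
  /\ Tt n a c = Tt n (c - a - n%:R) c
  /\ Tt n a c = Tt n (c - a - n%:R) (1 - a - n%:R)
  /\ Tt n a c = Tt n (1 - c - n%:R) (1 + a - c)
  /\ Tt n a c = Tt n (1 - c - n%:R) (1 - a - n%:R).
Proof.
move=> def1 def2 def3 def4 def5 def6.
rewrite (Tt_Tuv def1 erefl) (Tt_Tuv (u := c) def2) ?(Tt_Tuv (u := 1 - a - n%:R) def3)
  ?(Tt_Tuv (u := c) def4) ?(Tt_Tuv (u := 1 - a - n%:R) def5) ?(Tt_Tuv (u := 1 + a - c) def6);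
  [apply: Tuv_perm | ..]; ring.
Qed.

Lemma Ut_symmetric (x y z : F) :
  Ut_defined n x y z -> Ut_defined n x z y -> Ut_defined n y x z ->
  Ut_defined n y z x -> Ut_defined n z x y -> Ut_defined n z y x ->
  Ut n x y z = Ut n x z y
  /\ Ut n x y z = Ut n y x z
  /\ Ut n x y z = Ut n y z x
  /\ Ut n x y z = Ut n z x y
  /\ Ut n x y z = Ut n z y x.
Proof.
move=> def1 def2 def3 def4 def5 def6; set s := x + y + z.
have three_neq0 : 3%:R != 0 :> F by rewrite pnatr_eq0.
rewrite (Ut_Tuv (s := s) erefl def1) (Ut_Tuv (s := s) _ def2) ?(Ut_Tuv (s := s) _ def3)
  ?(Ut_Tuv (s := s) _ def4) ?(Ut_Tuv (s := s) _ def5) ?(Ut_Tuv (s := s) _ def6);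
  [apply: Tuv_perm | ..].
all: by rewrite /s; field.
Qed.

End Transformations.

Theorem mainTheorem7 (R : realType) (n : nat) :
  (* the 3F2 transformation, whenever both sides are defined *)
  (forall a c : R[i],
     admissible (1 + a - c) -> admissible c -> admissible (1 - a - n%:R) ->
     F32 n (a / 2%:R) ((a + 1) / 2%:R) (1 + a - c) c 4%:R
     = (-1) ^+ n * poch a n / poch (1 + a - c) n *
       F32 n ((c - a - n%:R) / 2%:R) ((c - a - n%:R + 1) / 2%:R)
             (1 - a - n%:R) c 4%:R)
  /\
  (* hence T~_n(a,c) = T~_n(c-a-n,c) whenever both sides are defined *)
  (forall a c : R[i],
     Tt_defined a c -> Tt_defined (c - a - n%:R) c ->
     Tt n a c = Tt n (c - a - n%:R) c)
  /\
  (* the group generated by g1, g2 is isomorphic to S_3: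
     two involutions whose product has order 3 and which do not commute *)
  (forall p : R[i] * R[i], g1 n (g1 n p) = p)
  /\ (forall p : R[i] * R[i], g2 n (g2 n p) = p)
  /\ (forall p : R[i] * R[i],
        g1 n (g2 n (g1 n (g2 n (g1 n (g2 n p))))) = p)
  /\ ~ (forall p : R[i] * R[i], g1 n (g2 n p) = g2 n (g1 n p))
  /\
  (* the six invariances, whenever all terms are defined *)
  (forall a c : R[i],
     Tt_defined a c -> Tt_defined a (1 + a - c) ->
     Tt_defined (c - a - n%:R) c -> Tt_defined (c - a - n%:R) (1 - a - n%:R) ->
     Tt_defined (1 - c - n%:R) (1 + a - c) -> Tt_defined (1 - c - n%:R) (1 - a - n%:R) ->
     Tt n a c = Tt n a (1 + a - c)
     /\ Tt n a c = Tt n (c - a - n%:R) c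
     /\ Tt n a c = Tt n (c - a - n%:R) (1 - a - n%:R)
     /\ Tt n a c = Tt n (1 - c - n%:R) (1 + a - c)
     /\ Tt n a c = Tt n (1 - c - n%:R) (1 - a - n%:R))
  /\
  (* U~_n is invariant under all six permutations of (x,y,z) *)
  (forall x y z : R[i],
     Ut_defined n x y z -> Ut_defined n x z y -> Ut_defined n y x z ->
     Ut_defined n y z x -> Ut_defined n z x y -> Ut_defined n z y x ->
     Ut n x y z = Ut n x z y
     /\ Ut n x y z = Ut n y x z
     /\ Ut n x y z = Ut n y z x
     /\ Ut n x y z = Ut n z x y
     /\ Ut n x y z = Ut n z y x).
Proof.
split; first exact: F32_reflection.
split; first exact: Tt_reflection.
split; first exact: g1K.
split; first exact: g2K.
split; first exact: g1g2_order3.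
split; first exact: g1g2_noncommuting.
split; first exact: Tt_invariances.
exact: Ut_symmetric.
Qed.
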